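(* For each integer $t\ge0$ and each even integer $n\ge4$, there exists a binary even-like Euclidean self-orthogonal $[2^{t+1}n,\,n+t,\,2^{t+2}]_2$ code.
   Context: A binary code is even-like if every codeword has even Hamming weight. A code $\mathcal{C}$ is Euclidean self-orthogonal if $\mathcal{C}\subseteq\mathcal{C}^{\perp_E}$, where $\perp_E$ is the dual under $\sum_ix_iy_i$. *)

From HB Require Import structures.
From mathcomp Require Import all_boot all_order all_algebra.
Set Implicit Arguments. Unset Strict Implicit. Unset Printing Implicit Defensive.
Import GRing.Theory.
Local Open Scope ring_scope.

Notation bcode N := {vspace 'rV['F_2]_N}.

Definition wt (N : nat) (x : 'rV['F_2]_N) : nat := #|[set i | x 0 i != 0]|.

Definition dotE (N : nat) (x y : 'rV['F_2]_N) : 'F_2 := \sum_i x 0 i * y 0 i.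

Definition even_like (N : nat) (C : bcode N) : Prop :=
  forall c, c \in C -> ~~ odd (wt c).

Definition dualE (N : nat) (C : bcode N) : {set 'rV['F_2]_N} :=
  [set y | [forall x, (x \in C) ==> (dotE x y == 0)]].

Definition self_orthogonalE (N : nat) (C : bcode N) : Prop :=
  forall x, x \in C -> x \in dualE C.

Definition min_distance (N : nat) (C : bcode N) (d : nat) : Prop :=
  (exists2 c, c \in C & (c != 0) && (wt c == d)) /\
  (forall c, c \in C -> c != 0 -> (d <= wt c)%N).

Definition is_code (N : nat) (C : bcode N) (k d : nat) : Prop :=
  \dim C = k /\ min_distance C d.

From mathcomp Require Import all_boot all_order all_algebra ring.
Set Implicit Arguments. Unset Strict Implicit. Unset Printing Implicit Defensive.
Import GRing.Theory.
Local Open Scope ring_scope.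

(* Start from the even-weight [n, n-1, 2] code and apply t+1 times the
   construction C |-> {(u + b1 | u) : u in C, b in F_2}, the Plotkin sum of C
   with the repetition code.  For C an [N, k, d] code with 2d <= N it gives an
   [2N, k+1, 2d] code, since (u + 1 | u) has weight exactly N.  All its words
   have weight 2 wt(u) or N, hence even when N is.  The inner product of
   (u + b1 | u) and (v + c1 | v) is c wt(u) + b wt(v) + bc N mod 2, which
   vanishes as soon as C is even-like and N is even, so every iterate is
   self-orthogonal. *)

Lemma F2_cases (a : 'F_2) : a = 0 \/ a = 1.
Proof. by case: a => [[|[|]]] //= H; [left|right]; apply: val_inj. Qed.

Lemma natr_F2 m : (m%:R : 'F_2) = (odd m)%:R.
Proof. by rewrite -(Fp_nat_mod (isT : prime 2)) modn2. Qed.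

Lemma natr_F2_eq0 m : ((m%:R : 'F_2) == 0) = ~~ odd m.
Proof. by rewrite natr_F2; case: (odd m); rewrite ?oner_eq0 ?eqxx. Qed.

Lemma addrr_F2 (a : 'F_2) : a + a = 0.
Proof. exact: (addrr_pchar2 (pchar_Fp (isT : prime 2))). Qed.

Section Weight.
Variable N : nat.
Implicit Types x y : 'rV['F_2]_N.

Lemma wtE x : wt x = (\sum_i (x 0%R i != 0%R))%N.
Proof.
by rewrite /wt -sum1dep_card big_mkcond; apply: eq_bigr => i _; case: (_ != _).
Qed.

Lemma sum_row_F2 x : \sum_i x 0 i = (wt x)%:R.
Proof.
by rewrite wtE natr_sum; apply: eq_bigr => i _; case: (F2_cases (x 0 i)) => ->.
Qed.

Lemma even_wtE x : ~~ odd (wt x) = (\sum_i x 0 i == 0).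
Proof. by rewrite sum_row_F2 natr_F2_eq0. Qed.

Lemma wt_eq0 x : (wt x == 0%N) = (x == 0).
Proof.
rewrite /wt cards_eq0; apply/eqP/eqP => [x0 | ->].
  apply/rowP => j; apply/eqP; rewrite mxE; apply: contraT => xj.
  by have := in_set0 j; rewrite -x0 inE xj.
by apply/setP => j; rewrite !inE mxE eqxx.
Qed.

Lemma wt_delta_mx (i : 'I_N) : wt (delta_mx 0 i) = 1%N.
Proof.
rewrite /wt (_ : [set j | _] = [set i]) ?cards1 //; apply/setP => j.
by rewrite !inE mxE eqxx /=; case: (j == i); rewrite ?oner_eq0 ?eqxx.
Qed.

Lemma wt_delta_mxD (i i' : 'I_N) : i != i' -> wt (delta_mx 0 i + delta_mx 0 i') = 2.
Proof.
move=> ii'; rewrite /wt (_ : [set j | _] = [set i; i']) ?cards2 ?ii' //.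
apply/setP => j; rewrite !inE !mxE eqxx /=.
have [-> | ji] := eqVneq j i; first by rewrite (negbTE ii') addr0 oner_eq0.
by case: (j == i'); rewrite ?add0r ?oner_eq0 ?eqxx.
Qed.

Lemma dotE_add_const x y (b c : 'F_2) :
  dotE (x + b *: const_mx 1) (y + c *: const_mx 1)
  = dotE x y + c * (wt x)%:R + b * (wt y)%:R + b * c * N%:R.
Proof.
have -> : N%:R = \sum_(i < N) 1 :> 'F_2 by rewrite sumr_const card_ord.
rewrite /dotE -!sum_row_F2 !mulr_sumr.
rewrite -!big_split /=; apply: eq_bigr => i _; rewrite !mxE; ring.
Qed.

End Weight.

Lemma wt_row_mx N M (x : 'rV['F_2]_N) (y : 'rV['F_2]_M) :
  wt (row_mx x y) = (wt x + wt y)%N.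
Proof.
by rewrite !wtE big_split_ord; congr (_ + _)%N; apply: eq_bigr => i _;
  rewrite ?row_mxEl ?row_mxEr.
Qed.

Lemma dotE_row_mx N M (x x' : 'rV['F_2]_N) (y y' : 'rV['F_2]_M) :
  dotE (row_mx x y) (row_mx x' y') = dotE x x' + dotE y y'.
Proof.
by rewrite /dotE big_split_ord; congr (_ + _); apply: eq_bigr => i _;
  rewrite ?row_mxEl ?row_mxEr.
Qed.

Lemma wt_row_mx_add1 N (x : 'rV['F_2]_N) : wt (row_mx (x + const_mx 1) x) = N.
Proof.
rewrite wt_row_mx !wtE -big_split /= -[N in RHS]card_ord -sum1_card.
by apply: eq_bigr => i _; rewrite !mxE; case: (F2_cases (x 0 i)) => ->.
Qed.

Section PlotkinRepetition.
Variable N : nat.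
Implicit Types (C : bcode N) (x : 'rV['F_2]_N).

Definition dup_row : 'Hom('rV['F_2]_N, 'rV['F_2]_(N + N)) :=
  linfun (mulmxr (row_mx 1%:M 1%:M)).

Lemma dup_rowE x : dup_row x = row_mx x x.
Proof. by rewrite lfunE /= mul_mx_row mulmx1. Qed.

Definition plotkin_rep C : bcode (N + N) :=
  (dup_row @: C + <[row_mx (const_mx 1) 0]>)%VS.

Lemma plotkin_repP C v :
  reflect (exists x b, x \in C /\ v = row_mx (x + b *: const_mx 1) x)
          (v \in plotkin_rep C).
Proof.
have dupE x b :
    dup_row x + b *: row_mx (const_mx 1) 0 = row_mx (x + b *: const_mx 1) x.
  by rewrite dup_rowE scale_row_mx scaler0 add_row_mx addr0.
apply: (iffP memv_addP) => [|[x [b [Cx ->]]]].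
  by case=> _ /memv_imgP [x Cx ->] [_ /vlineP [b ->] ->]; exists x, b; rewrite dupE.
exists (dup_row x); first exact: memv_img.
by exists (b *: row_mx (const_mx 1) 0); rewrite ?memvZ ?memv_line ?dupE.
Qed.

Lemma dim_plotkin_rep C : (0 < N)%N -> \dim (plotkin_rep C) = (\dim C).+1.
Proof.
move=> N_gt0; rewrite dimv_disjoint_sum; last first.
  apply/eqP; rewrite -subv0; apply/subvP => v /memv_capP [/memv_imgP [x _ ->]].
  case/vlineP => b; rewrite dup_rowE scale_row_mx scaler0 => /eq_row_mx [_ ->].
  by rewrite row_mx0 memv0.
have dup_inj : lker dup_row == 0%VS.
  by apply/lker0P => x y; rewrite !dup_rowE => /eq_row_mx [].
rewrite limg_dim_eq; last by rewrite (eqP dup_inj) capv0.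
rewrite dim_vline (_ : row_mx _ _ != 0) ?addn1 //.
apply/eqP => /rowP /(_ (lshift N (Ordinal N_gt0))).
by rewrite row_mxEl !mxE => /eqP; rewrite oner_eq0.
Qed.

Lemma wt_plotkin_rep x (b : 'F_2) :
  wt (row_mx (x + b *: const_mx 1) x) = if b == 0 then (wt x).*2 else N.
Proof.
case: (F2_cases b) => ->; rewrite ?eqxx ?oner_eq0.
  by rewrite scale0r addr0 wt_row_mx addnn.
by rewrite scale1r wt_row_mx_add1.
Qed.

Lemma min_distance_plotkin_rep C d :
  (d.*2 <= N)%N -> min_distance C d -> min_distance (plotkin_rep C) d.*2.
Proof.
move=> dN [[c Cc /andP [c0 /eqP wt_c]] C_min]; split.
  exists (row_mx c c).
    by apply/plotkin_repP; exists c, 0; rewrite scale0r addr0.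
  rewrite wt_row_mx wt_c -addnn eqxx andbT -row_mx0.
  by apply: contra c0 => /eqP /eq_row_mx [-> _].
move=> v /plotkin_repP [x [b [Cx ->]]] v0; rewrite wt_plotkin_rep.
have [b0 | //] := eqVneq b 0; move: v0; rewrite b0 scale0r addr0 -row_mx0 => v0.
by rewrite leq_double C_min //; apply: contra v0 => /eqP ->.
Qed.

Lemma even_like_plotkin_rep C : ~~ odd N -> even_like (plotkin_rep C).
Proof.
move=> N_even v /plotkin_repP [x [b [_ ->]]].
by rewrite wt_plotkin_rep; case: eqP; rewrite ?odd_double.
Qed.

Lemma self_orthogonal_plotkin_rep C :
  ~~ odd N -> even_like C -> self_orthogonalE (plotkin_rep C).
Proof.
move=> N_even C_even v /plotkin_repP [x [b [Cx ->]]]; rewrite inE.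
apply/forallP => w; apply/implyP => /plotkin_repP [y [c [Cy ->]]].
have even0 z : ~~ odd z -> z%:R = 0 :> 'F_2 by rewrite -natr_F2_eq0 => /eqP.
rewrite dotE_row_mx dotE_add_const !even0 ?C_even //.
by rewrite !mulr0 !addr0 addrr_F2.
Qed.

End PlotkinRepetition.

Lemma plotkin_rep_code N k d (C : bcode N) :
  (0 < N)%N -> ~~ odd N -> (d.*2 <= N)%N -> is_code C k d -> even_like C ->
  [/\ is_code (plotkin_rep C) k.+1 d.*2, even_like (plotkin_rep C)
    & self_orthogonalE (plotkin_rep C)].
Proof.
move=> N_gt0 N_even dN [dimC C_min] C_even; split.
- by split; [rewrite dim_plotkin_rep ?dimC | exact: min_distance_plotkin_rep].
- exact: even_like_plotkin_rep.
- exact: self_orthogonal_plotkin_rep.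
Qed.

Section EvenWeightCode.
Variable n : nat.
Implicit Types x : 'rV['F_2]_n.

Definition parity : 'Hom('rV['F_2]_n, 'rV['F_2]_1) :=
  linfun (mulmxr (const_mx 1)).

Lemma parityE x : parity x = const_mx (\sum_i x 0 i).
Proof.
apply/rowP => j; rewrite lfunE /= !mxE.
by apply: eq_bigr => i _; rewrite mxE mulr1.
Qed.

Definition even_weight_code : bcode n := lker parity.

Lemma mem_even_weight_code x : (x \in even_weight_code) = ~~ odd (wt x).
Proof.
rewrite memv_ker parityE even_wtE; apply/eqP/eqP => [/rowP /(_ 0) | ->].
  by rewrite !mxE.
by apply/rowP => j; rewrite !mxE.
Qed.

Lemma even_like_even_weight_code : even_like even_weight_code.
Proof. by move=> x; rewrite mem_even_weight_code. Qed.

Lemma dim_even_weight_code : (0 < n)%N -> \dim even_weight_code = n.-1.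
Proof.
move=> n_gt0; pose e0 : 'rV['F_2]_n := delta_mx 0 (Ordinal n_gt0).
have parity_e0 : parity e0 != 0.
  by rewrite -memv_ker mem_even_weight_code wt_delta_mx.
have dim_img : \dim (parity @: fullv) = 1%N.
  apply/eqP; rewrite eqn_leq; apply/andP; split.
    by have := dimvS (subvf (parity @: fullv)); rewrite dimvf dim_matrix.
  rewrite lt0n dimv_eq0; apply: contra parity_e0 => /eqP img0.
  by rewrite -memv0 -img0 memv_img ?memvf.
have := limg_ker_dim parity fullv.
by rewrite capfv dimvf dim_matrix mul1r dim_img addn1 => /(congr1 predn).
Qed.

Lemma min_distance_even_weight_code : (1 < n)%N -> min_distance even_weight_code 2.
Proof.
move=> n_gt1; split.
  pose i0 : 'I_n := Ordinal (ltnW n_gt1); pose i1 : 'I_n := Ordinal n_gt1.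
  have wt_c := @wt_delta_mxD n i0 i1 isT.
  exists (delta_mx 0 i0 + delta_mx 0 i1); first by rewrite mem_even_weight_code wt_c.
  by rewrite wt_c -wt_eq0 wt_c.
move=> x; rewrite mem_even_weight_code -wt_eq0.
by case: (wt x) => [|[|]].
Qed.

End EvenWeightCode.

Theorem theorem12 (t n : nat) :
  (4 <= n)%N -> ~~ odd n ->
  exists C : {vspace 'rV['F_2]_(2 ^ t.+1 * n)},
    is_code C (n + t) (2 ^ t.+2) /\ even_like C /\ self_orthogonalE C.
Proof.
move=> n_ge4 n_even; have n_gt0 : (0 < n)%N by apply: leq_trans n_ge4.
elim: t => [|t [C [C_code [C_even _]]]].
  have E_code : is_code (even_weight_code n) n.-1 2.
    split; first exact: dim_even_weight_code.
    by apply: min_distance_even_weight_code; apply: leq_trans n_ge4.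
  have [E2_code E2_even E2_so] :=
    plotkin_rep_code n_gt0 n_even (n_ge4 : 2.*2 <= n)%N E_code (@even_like_even_weight_code n).
  rewrite prednK // in E2_code.
  by rewrite expn1 mul2n -[n.*2]addnn addn0; exists (plotkin_rep (even_weight_code n)).
have len : (2 ^ t.+2 * n = 2 ^ t.+1 * n + 2 ^ t.+1 * n)%N.
  by rewrite expnS -mulnA mul2n addnn.
have dist : (2 ^ t.+3 = (2 ^ t.+2).*2)%N by rewrite expnS mul2n.
have dist_le : ((2 ^ t.+2).*2 <= 2 ^ t.+1 * n)%N.
  by rewrite -dist -[t.+3]addn2 expnD leq_mul2l n_ge4 orbT.
have [] := plotkin_rep_code _ _ dist_le C_code C_even.
- by rewrite muln_gt0 expn_gt0.
- by rewrite oddM (negbTE n_even) andbF.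
by rewrite len dist addnS; exists (plotkin_rep C).
Qed.
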